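(* Let $n\ge 4$ and $k\ge 2$. There is an intersecting family $\mathcal{F}\subseteq\mathcal{I}_{n,k}^3$ with $\bigcap_{F\in\mathcal{F}}F=\emptyset$ and $|\mathcal{F}| = |\mathcal{H}_{n,k}^3|$ that is not isomorphic to $\mathcal{H}_{n,k}^3$.
   Context: $\Gamma_{n,k}$ is the disjoint union of $n$ copies of $K_k$, with vertices $(i,j)$, $i\in[n]$ the copy, $j\in[k]$ the vertex within it. $\mathcal{I}_{n,k}^r$ is the set of independent sets of size $r$ in $\Gamma_{n,k}$. A family is intersecting if every two members meet. Families are isomorphic if one is the image of the other under an automorphism of $\Gamma_{n,k}$. For $r\le n-1$, with $H=\{(2,1),\dots,(r+1,1)\}$, $\mathcal{H}_{n,k}^r = \{ F \in \mathcal{I}_{n,k}^r : (1,1)\in F,\ F \cap H \neq \emptyset \} \cup \{H\}$. *)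

From mathcomp Require Import all_boot all_fingroup.
Set Implicit Arguments. Unset Strict Implicit. Unset Printing Implicit Defensive.

(* Vertices of Gamma_{n,k}: (i,j) with i : copy (0-indexed), j : vertex in copy. *)
Definition vert (n k : nat) : finType := ('I_n * 'I_k)%type.

Definition adj (n k : nat) (u v : vert n k) : bool :=
  (u.1 == v.1) && (u.2 != v.2).

Definition independent (n k : nat) (A : {set vert n k}) : bool :=
  [forall u in A, forall v in A, ~~ adj u v].

Definition Indep (n k r : nat) : {set {set vert n k}} :=
  [set A : {set vert n k} | independent A && (#|A| == r)].

Definition intersecting (n k : nat) (F : {set {set vert n k}}) : Prop :=
  forall A B, A \in F -> B \in F -> A :&: B != set0.

Definition is_aut (n k : nat) (s : {perm vert n k}) : Prop :=
  forall u v, adj (s u) (s v) = adj u v.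

Definition fam_iso (n k : nat) (F G : {set {set vert n k}}) : Prop :=
  exists s : {perm vert n k}, is_aut s /\ [set s @: (A : {set vert n k}) | A in F] = G.

(* The vertex (1,1) of the paper, i.e. (0,0) 0-indexed. *)
Definition is11 (n k : nat) (v : vert n k) : bool :=
  (nat_of_ord v.1 == 0) && (nat_of_ord v.2 == 0).

(* H = {(2,1),...,(r+1,1)} (paper's 1-indexing). *)
Definition Hset (n k r : nat) : {set vert n k} :=
  [set v : vert n k | (1 <= nat_of_ord v.1 <= r) && (nat_of_ord v.2 == 0)].

Definition Hfam (n k r : nat) : {set {set vert n k}} :=
  [set F in Indep n k r | [exists v in F, is11 v] && (F :&: Hset n k r != set0)]
  :|: [set Hset n k r].

From mathcomp Require Import all_boot all_fingroup.
Set Implicit Arguments. Unset Strict Implicit. Unset Printing Implicit Defensive.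

(* Take the independent 3-sets meeting T = {(1,1),(2,1),(3,1)} in at least two
   vertices; two of them meet because two 2-subsets of T do.  Outside their
   common part, H^3 consists of the sets containing (1,1) and (4,1) but neither
   (2,1) nor (3,1), and the new family of the sets containing (2,1) and (3,1) but
   neither (1,1) nor (4,1); the automorphism swapping copies 1 <-> 2 and 3 <-> 4
   exchanges the two, so both families have the same size.  Finally (1,1) avoids
   only the member H of H^3, whereas every vertex avoids two members of the new
   family, so no bijection of the vertices maps one family onto the other. *)

Section SetFacts.
Variable T : finType.
Implicit Types (A B S : {set T}) (F : {set {set T}}).

Lemma card_setIU1 A S x :
  x \notin S -> #|A :&: (x |: S)| = (x \in A) + #|A :&: S|.
Proof.
move=> xS; have [xA|xA] := boolP (x \in A).
  have -> : A :&: (x |: S) = x |: (A :&: S).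
    by apply/setP => y; rewrite !inE; case: eqP => [->|]; rewrite ?xA.
  by rewrite cardsU1 inE (negbTE xS) andbF.
have -> // : A :&: (x |: S) = A :&: S.
by apply/setP => y; rewrite !inE; case: eqP => [->|]; rewrite ?(negbTE xA).
Qed.

Lemma card_setI3 A a b c : a != b -> a != c -> b != c ->
  #|A :&: [set a; b; c]| = (a \in A) + (b \in A) + (c \in A).
Proof.
move=> ab ac bc; rewrite -setUA -[[set c]]setU0.
by rewrite !card_setIU1 ?setI0 ?cards0 ?addn0 ?addnA // !inE ?negb_or ?ab ?ac ?bc.
Qed.

Lemma cards3 (a b c : T) : a != b -> a != c -> b != c -> #|[set a; b; c]| = 3.
Proof.
by move=> ab ac bc; rewrite -(setIid [set a; b; c]) card_setI3 // !inE !eqxx ?orbT.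
Qed.

Lemma setI_neq0_card S A B :
  #|S| < #|A :&: S| + #|B :&: S| -> A :&: B != set0.
Proof.
rewrite -cardsUI => lt_S; rewrite -card_gt0.
have sub : (A :&: S) :|: (B :&: S) \subset S by rewrite subUset !subsetIr.
have := leq_ltn_trans (subset_leq_card sub) lt_S.
rewrite -addn1 leq_add2l => /leq_trans; apply.
by apply: subset_leq_card; rewrite setIACA setIid subsetIl.
Qed.

Lemma bigcap_eq0 F : (forall x, exists2 A, A \in F & x \notin A) ->
  \bigcap_(A in F) A = set0.
Proof.
move=> miss; apply/setP => x; rewrite inE; apply/bigcapP => allF.
by have [A /allF xA] := miss x; rewrite xA.
Qed.

Lemma card_eq_setD (X Y : {set T}) (f : T -> T) : injective f ->
    {in X :\: Y, forall x, f x \in Y :\: X} ->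
    {in Y :\: X, forall y, f y \in X :\: Y} ->
  #|X| = #|Y|.
Proof.
move=> inj_f XY YX.
have le_img (D E : {set T}) : {in D, forall x, f x \in E} -> #|D| <= #|E|.
  move=> DE; rewrite -(card_imset D inj_f); apply: subset_leq_card.
  by apply/subsetP => _ /imsetP[x Dx ->]; apply: DE.
rewrite -(cardsID Y X) -(cardsID X Y) setIC; congr (_ + _).
by apply/eqP; rewrite eqn_leq !le_img.
Qed.

Lemma preimset_perm_inj (s : {perm T}) : injective (fun A : {set T} => s @^-1: A).
Proof.
by move=> A B /setP eqAB; apply/setP => x; have := eqAB ((s^-1)%g x); rewrite !inE permKV.
Qed.

End SetFacts.

Section Graph.
Variables n k : nat.
Implicit Types (u v : vert n k) (A : {set vert n k}) (F G : {set {set vert n k}}).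

Lemma independentP A :
  reflect {in A &, forall u v, ~~ adj u v} (independent A).
Proof.
apply: (iffP forall_inP) => [indA u v uA vA | indA u uA].
  exact: (forall_inP (indA u uA) v vA).
by apply/forall_inP => v; apply: indA.
Qed.

Lemma triple_Indep a b c : a.1 != b.1 -> a.1 != c.1 -> b.1 != c.1 ->
  [set a; b; c] \in Indep n k 3.
Proof.
move=> ab ac bc.
have neq u v : u.1 != v.1 -> u != v by apply: contraNneq => ->.
rewrite inE cards3 ?neq // eqxx andbT.
apply/independentP => u v.
move=> /setUP[/set2P[]|/set1P]-> /setUP[/set2P[]|/set1P]->; rewrite /adj ?eqxx ?andbF //.
all: by rewrite negb_and ?ab ?ac ?bc // eq_sym ?ab ?ac ?bc.
Qed.

Lemma Indep_preimset r (s : {perm vert n k}) A :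
  is_aut s -> A \in Indep n k r -> s @^-1: A \in Indep n k r.
Proof.
rewrite !inE card_preimset; last exact: perm_inj.
move=> aut_s /andP[/independentP indA ->]; rewrite andbT.
by apply/independentP => u v; rewrite !inE -aut_s; apply: indA.
Qed.

Definition copy_fun (t : {perm 'I_n}) (v : vert n k) : vert n k := (t v.1, v.2).

Lemma copy_fun_inj t : injective (copy_fun t).
Proof. by move=> [i j] [i' j'] [/perm_inj -> ->]. Qed.

Definition copy_perm (t : {perm 'I_n}) : {perm vert n k} := perm (@copy_fun_inj t).

Lemma copy_permE t v : copy_perm t v = (t v.1, v.2).
Proof. by rewrite permE. Qed.

Lemma is_aut_copy_perm t : is_aut (copy_perm t).
Proof. by move=> u v; rewrite !copy_permE /adj /= (inj_eq perm_inj). Qed.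

Lemma is11_inj u v : is11 u -> is11 v -> u = v.
Proof.
case: u v => [[i ?] [j ?]] [[i' ?] [j' ?]] /andP[/eqP/= ei /eqP/= ej].
case/andP=> /eqP/= ei' /eqP/= ej'.
by congr pair; apply: val_inj; rewrite /= ?ei ?ei' ?ej ?ej'.
Qed.

Lemma existsb_is11 v A : is11 v -> [exists u in A, is11 u] = (v \in A).
Proof.
move=> v11; apply/existsP/idP => [[u /andP[uA /is11_inj/(_ v11) <-]] // | vA].
by exists v; rewrite vA.
Qed.

Lemma Hfam_avoid_is11 r v A :
  is11 v -> A \in Hfam n k r -> v \notin A -> A = Hset n k r.
Proof.
move=> v11; rewrite !inE (existsb_is11 _ v11).
by case/orP=> [/and3P[_ vA _] | /eqP //]; rewrite vA.
Qed.

Lemma not_fam_iso F G v0 H0 :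
    (forall v, exists A B, [/\ A \in F, B \in F, A != B, v \notin A & v \notin B]) ->
    (forall A, A \in G -> v0 \notin A -> A = H0) ->
  ~ fam_iso F G.
Proof.
move=> avoidF avoidG [s [_ FG]].
have [A [B [AF BF /eqP neqAB vA vB]]] := avoidF ((s^-1)%g v0).
have to_H0 C : C \in F -> (s^-1)%g v0 \notin C -> s @: C = H0.
  move=> CF vC; apply: avoidG; first by rewrite -FG imset_f.
  by rewrite -{1}(permKV s v0) (mem_imset _ _ (@perm_inj _ s)).
by apply: neqAB; apply: (imset_inj (@perm_inj _ s)); rewrite !to_H0.
Qed.

End Graph.

Arguments copy_perm {n k} t.

Section TriangleFamily.
Variables n k : nat.
Local Notation V := (vert n.+4 k.+2).
Local Notation Indep3 := (Indep n.+4 k.+2 3).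
Local Notation Hfam3 := (Hfam n.+4 k.+2 3).
Implicit Types A : {set V}.

(* [vtx i j] is the vertex (i+1, j+1) of the paper. *)
Definition vtx i j (lt_i : i < n.+4) (lt_j : j < k.+2) : V := (Ordinal lt_i, Ordinal lt_j).
Definition v00 := @vtx 0 0 isT isT.
Definition v10 := @vtx 1 0 isT isT.
Definition v20 := @vtx 2 0 isT isT.
Definition v30 := @vtx 3 0 isT isT.
Definition v31 := @vtx 3 1 isT isT.

Definition Tset : {set V} := [set v00; v10; v20].
Definition Tfam : {set {set V}} := [set A in Indep3 | 1 < #|A :&: Tset|].

Lemma Hset_eq : Hset n.+4 k.+2 3 = [set v10; v20; v30].
Proof. by apply/setP => -[[[|[|[|[|i]]]] ?] [[|j] ?]]; rewrite !inE. Qed.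

Lemma mem_Tfam A :
  (A \in Tfam) = (A \in Indep3) && (1 < (v00 \in A) + (v10 \in A) + (v20 \in A)).
Proof. by rewrite inE card_setI3. Qed.

Lemma mem_Hfam A : (A \in Hfam3) =
  (A \in Indep3) && (v00 \in A) && (0 < (v10 \in A) + (v20 \in A) + (v30 \in A))
  || (A == [set v10; v20; v30]).
Proof.
by rewrite !inE (existsb_is11 _ (isT : is11 v00)) -card_gt0 Hset_eq card_setI3 ?andbA.
Qed.

Lemma Hset_Indep : [set v10; v20; v30] \in Indep3.
Proof. exact: triple_Indep. Qed.

Lemma mem_Hfam_Tfam A : (A \in Hfam3 :\: Tfam) =
  (A \in Indep3) && [&& v00 \in A, v30 \in A, v10 \notin A & v20 \notin A].
Proof.
rewrite in_setD mem_Hfam mem_Tfam.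
have [->|_] := eqVneq A [set v10; v20; v30]; first by rewrite Hset_Indep !inE.
by rewrite orbF; case: (A \in Indep3); case: (v00 \in A); case: (v10 \in A);
  case: (v20 \in A); case: (v30 \in A).
Qed.

Lemma mem_Tfam_Hfam A : (A \in Tfam :\: Hfam3) =
  (A \in Indep3) && [&& v10 \in A, v20 \in A, v00 \notin A & v30 \notin A].
Proof.
rewrite in_setD mem_Hfam mem_Tfam.
have [->|notH] := eqVneq A [set v10; v20; v30]; first by rewrite Hset_Indep !inE.
have not_full : ~~ [&& A \in Indep3, v10 \in A, v20 \in A & v30 \in A].
  apply: contra_neqN notH => /and4P[indA A1 A2 A3].
  move: indA; rewrite inE => /andP[_ /eqP cardA].
  apply/esym/eqP; rewrite eqEcard cardA cards3 // leqnn andbT.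
  by apply/subsetP => x /setUP[/set2P[]|/set1P]->.
rewrite orbF; move: not_full.
by case: (A \in Indep3); case: (v00 \in A); case: (v10 \in A);
  case: (v20 \in A); case: (v30 \in A).
Qed.

Definition swap_copies : {perm V} := copy_perm (tperm v00.1 v10.1 * tperm v20.1 v30.1)%g.

Lemma mem_preim_swap_copies A : let s := swap_copies in
  [/\ (v00 \in s @^-1: A) = (v10 \in A), (v10 \in s @^-1: A) = (v00 \in A),
      (v20 \in s @^-1: A) = (v30 \in A) & (v30 \in s @^-1: A) = (v20 \in A)].
Proof. by split; rewrite inE copy_permE permM !permE. Qed.

Lemma card_Tfam : #|Tfam| = #|Hfam3|.
Proof.
have swapP B : B \in Indep3 -> swap_copies @^-1: B \in Indep3.
  exact/Indep_preimset/is_aut_copy_perm.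
apply: (card_eq_setD (@preimset_perm_inj _ swap_copies)) => A;
  rewrite mem_Hfam_Tfam mem_Tfam_Hfam; case: (mem_preim_swap_copies A) => -> -> -> ->;
  by case/andP=> /swapP ->.
Qed.

Lemma Tfam_intersecting : intersecting Tfam.
Proof.
move=> A B; rewrite !inE => /andP[_ A2] /andP[_ B2]; apply: (setI_neq0_card (S := Tset)).
by rewrite cards3 //; exact: (leq_add A2 B2).
Qed.

Lemma Tfam_avoid_two v :
  exists A B, [/\ A \in Tfam, B \in Tfam, A != B, v \notin A & v \notin B].
Proof.
have pick w a b x y : [set a; b; x] \in Tfam -> [set a; b; y] \in Tfam ->
    x \notin [set a; b; y] -> w \notin [set a; b; x] -> w \notin [set a; b; y] ->
  exists A B, [/\ A \in Tfam, B \in Tfam, A != B, w \notin A & w \notin B].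
  move=> xF yF xB vA vB; exists [set a; b; x], [set a; b; y]; split=> //.
  by apply: contraNneq xB => <-; rewrite !inE eqxx orbT.
have [|vT] := boolP (v \in Tset).
  rewrite !inE => /orP[/orP[]|]/eqP->; [apply: (pick _ v10 v20 v30 v31) |
    apply: (pick _ v00 v20 v30 v31) | apply: (pick _ v00 v10 v30 v31)];
  by rewrite ?mem_Tfam ?triple_Indep // !inE //=.
move: vT; rewrite !inE => /norP[/norP[v0 v1] v2].
have [->|v3] := eqVneq v v30;
  [apply: (pick _ v00 v10 v20 v31) | apply: (pick _ v00 v10 v20 v30)];
  by rewrite ?mem_Tfam ?triple_Indep // !inE //= ?negb_or ?v0 ?v1 ?v2 ?v3.
Qed.

Lemma bigcap_Tfam : \bigcap_(A in Tfam) A = set0.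
Proof.
apply: bigcap_eq0 => v; have [A [_ [AF _ _ vA _]]] := Tfam_avoid_two v.
by exists A.
Qed.

End TriangleFamily.

Theorem lemma3p2 (n k : nat) :
  4 <= n -> 2 <= k ->
  exists F : {set {set vert n k}},
    [/\ F \subset Indep n k 3,
        intersecting F,
        \bigcap_(A in F) A = set0,
        #|F| = #|Hfam n k 3| &
        ~ fam_iso F (Hfam n k 3)].
Proof.
case: n => [|[|[|[|n]]]] // _; case: k => [|[|k]] // _.
exists (Tfam n k); split.
- by apply/subsetP => A /setIdP[].
- exact: Tfam_intersecting.
- exact: bigcap_Tfam.
- exact: card_Tfam.
- apply: (not_fam_iso (@Tfam_avoid_two n k) (v0 := v00 n k)) => A.
  exact: Hfam_avoid_is11.
Qed.
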